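(* In the linear setting of the context with $\theta>0$ and $\lambda=(1-\sigma)\kappa$, for all $t\ge0$, $$\frac{d}{dt}V(x(t))\le(\sigma-1)\kappa V(x(t))+\frac{1}{\theta}\Big(V(x(0))e^{(\sigma-1)\kappa t}-V(x(t))\Big).$$
   Context: Consider $\dot x=Ax+Bu$, $x\in\mathbb{R}^n$, $u\in\mathbb{R}^m$, and a gain $K$ such that $A+BK$ is Hurwitz; let $P,Q$ be symmetric positive definite with $(A+BK)^\top P+P(A+BK)=-Q$, $V(x)=x^\top Px$, and $\kappa>0$ with $Q\ge\kappa P$. The input is $u(t)=Kx(t_i)$ for $t\in[t_i,t_{i+1})$, with $e(t)=x(t_i)-x(t)$, so $\dot x=Ax+BK(x+e)$. $g(t^-)$ is the left limit. Dynamic event generator with parameters $\sigma\in(0,1)$, $\lambda>0$, $\theta\ge0$: $\dot\eta=-\lambda\eta+\sigma x^\top Qx-2x^\top PBKe$, $\eta(0)=0$; $t_0=0$, $t_{i+1}=\inf\{t>t_i:\ \eta(t)+\theta(\sigma x(t)^\top Qx(t)-2x(t)^\top PBKe(t^-))\le0\}$. Assume $x(t_i)\ne0$ for all $i$. *)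

(* classical reals (derivatives, exp).
   Vectors in R^n are functions nat -> R (only indices < n matter);
   matrices are functions nat -> nat -> R (only the relevant index ranges matter). *)
From Stdlib Require Import Reals Lra Lia.
Open Scope R_scope.

Definition vec := nat -> R.
Definition mat := nat -> nat -> R.

Fixpoint vsum (n : nat) (f : nat -> R) : R :=
  match n with
  | O => 0
  | S k => vsum k f + f k
  end.

Definition mv (c : nat) (M : mat) (v : vec) : vec :=
  fun i => vsum c (fun j => M i j * v j).

Definition dot (n : nat) (v w : vec) : R := vsum n (fun i => v i * w i).

Definition quad (n : nat) (M : mat) (v : vec) : R := dot n v (mv n M v).

Definition vnonzero (n : nat) (v : vec) : Prop := exists k, (k < n)%nat /\ v k <> 0.

Definition symmetric (n : nat) (M : mat) : Prop :=
  forall i j, (i < n)%nat -> (j < n)%nat -> M i j = M j i.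

Definition posdef (n : nat) (M : mat) : Prop :=
  symmetric n M /\ forall v, vnonzero n v -> 0 < quad n M v.

Definition loewner_ge_scaled (n : nat) (Q : mat) (kappa : R) (P : mat) : Prop :=
  forall v, kappa * quad n P v <= quad n Q v.

(* M (n x n) is Hurwitz: every (complex) eigenvalue a + i b, with eigenvector
   vr + i vi <> 0, has negative real part.  M (vr + i vi) = (a + i b)(vr + i vi)
   is written out in real and imaginary parts. *)
Definition hurwitz (n : nat) (M : mat) : Prop :=
  forall (a b : R) (vr vi : vec),
    (exists k, (k < n)%nat /\ (vr k <> 0 \/ vi k <> 0)) ->
    (forall k, (k < n)%nat ->
       mv n M vr k = a * vr k - b * vi k /\ mv n M vi k = b * vr k + a * vi k) ->
    a < 0.

Definition Acl (m : nat) (A B K : mat) : mat :=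
  fun i j => A i j + vsum m (fun l => B i l * K l j).

(* (A+BK)^T P + P (A+BK) = - Q, entrywise *)
Definition lyapunov_eq (n m : nat) (A B K P Q : mat) : Prop :=
  forall i j, (i < n)%nat -> (j < n)%nat ->
    vsum n (fun l => Acl m A B K l i * P l j)
    + vsum n (fun l => P i l * Acl m A B K l j) = - Q i j.

Definition right_deriv (f : R -> R) (t l : R) : Prop :=
  forall eps, 0 < eps -> exists delta, 0 < delta /\
    forall h, 0 < h < delta -> Rabs ((f (t + h) - f t) / h - l) < eps.

Definition left_lim_vec (n : nat) (g : R -> vec) (t : R) (l : vec) : Prop :=
  forall k, (k < n)%nat ->
    forall eps, 0 < eps -> exists delta, 0 < delta /\
      forall r, t - delta < r < t -> Rabs (g r k - l k) < eps.

(* Event times t_0, t_1, ...: [nev = None] means infinitely many events,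
   [nev = Some N] means exactly the events t_0, ..., t_N (then t_{N+1} = +oo). *)
Definition ev_valid (nev : option nat) (i : nat) : Prop :=
  match nev with None => True | Some N => (i <= N)%nat end.
Definition ev_has_next (nev : option nat) (i : nat) : Prop :=
  match nev with None => True | Some N => (i < N)%nat end.

Definition in_interval (nev : option nat) (ts : nat -> R) (i : nat) (t : R) : Prop :=
  ev_valid nev i /\ ts i <= t /\ (ev_has_next nev i -> t < ts (S i)).

Definition is_inf (S : R -> Prop) (m : R) : Prop :=
  (forall s, S s -> m <= s) /\ (forall b, (forall s, S s -> b <= s) -> b <= m).

Definition xPBKw (n m : nat) (P B K : mat) (x w : vec) : R :=
  dot n x (mv n P (mv m B (mv n K w))).

Definition closed_loop (n m : nat) (A B K P Q : mat) (sigma lambda theta : R)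
  (x e : R -> vec) (eta : R -> R) (ts : nat -> R) (nev : option nat) : Prop :=
  ts O = 0 /\ eta 0 = 0 /\
  (forall i t k, in_interval nev ts i t -> (k < n)%nat -> e t k = x (ts i) k - x t k) /\
  (forall i t, in_interval nev ts i t -> 0 < t ->
     continuity_pt eta t /\ forall k, (k < n)%nat -> continuity_pt (fun s => x s k) t) /\
  (forall i t k, in_interval nev ts i t -> (k < n)%nat ->
     let d := mv n A (x t) k + mv m B (mv n K (x (ts i))) k in
     right_deriv (fun s => x s k) t d /\
     (ts i < t -> derivable_pt_lim (fun s => x s k) t d)) /\
  (forall i t, in_interval nev ts i t ->
     let d := - lambda * eta t + sigma * quad n Q (x t) - 2 * xPBKw n m P B K (x t) (e t) in
     right_deriv eta t d /\ (ts i < t -> derivable_pt_lim eta t d)) /\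
  (* event rule: t_{i+1} = inf { t > t_i : eta(t) + theta (sigma x^T Q x - 2 x^T P B K e(t^-)) <= 0 },
     the infimum of the empty set being +oo (no further event). *)
  (forall i, ev_valid nev i ->
     let Trig := fun s => ts i < s /\ exists l, left_lim_vec n e s l /\
                eta s + theta * (sigma * quad n Q (x s) - 2 * xPBKw n m P B K (x s) l) <= 0 in
     (ev_has_next nev i -> is_inf Trig (ts (S i))) /\
     (~ ev_has_next nev i -> forall s, ~ Trig s)).

(* Let V = x^T P x and gap = sigma x^T Q x - 2 x^T P B K e.  The proof has
   three ingredients:
   - algebra: by the Lyapunov equation, along [xdot = A x + B K x(t_i)] the
     derivative of V is [- x^T Q x + 2 x^T P B K e = - (1 - sigma) x^T Q x - gap];
   - comparison principles for one-sided derivatives, proved by continuous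
     induction: nonnegativity invariance and a Gronwall inequality;
   - the event rule: between events [eta + theta gap > 0] (the trigger is not
     met); hence [eta >= 0], and [V + eta] has derivative
     [- (1 - sigma) x^T Q x - lambda eta <= - lambda (V + eta)], so
     [V + eta <= V(0) e^(- lambda t)] with [lambda = (1 - sigma) kappa].
   Combining [- gap < eta / theta <= (V(0) e^(- lambda t) - V) / theta] with
   [x^T Q x >= kappa V] gives the stated bound. *)

From Stdlib Require Import Arith Reals Lra Lia.
Open Scope R_scope.

Lemma vsum_ext N f g :
  (forall k, (k < N)%nat -> f k = g k) -> vsum N f = vsum N g.
Proof.
  induction N as [|N IH]; intros Hfg; simpl; [reflexivity|].
  rewrite IH by (intros; apply Hfg; lia). rewrite Hfg by lia. reflexivity.
Qed.

Lemma vsum_add N f g : vsum N (fun k => f k + g k) = vsum N f + vsum N g.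
Proof. induction N as [|N IH]; simpl; [ring|]. rewrite IH; ring. Qed.

Lemma vsum_scal N c f : vsum N (fun k => c * f k) = c * vsum N f.
Proof. induction N as [|N IH]; simpl; [ring|]. rewrite IH; ring. Qed.

Lemma vsum_opp N f : vsum N (fun k => - f k) = - vsum N f.
Proof. induction N as [|N IH]; simpl; [ring|]. rewrite IH; ring. Qed.

Lemma vsum_zero N : vsum N (fun _ => 0) = 0.
Proof. induction N as [|N IH]; simpl; [ring|]. rewrite IH; ring. Qed.

Lemma vsum_swap N M F :
  vsum N (fun i => vsum M (fun j => F i j)) = vsum M (fun j => vsum N (fun i => F i j)).
Proof.
  induction N as [|N IH]; simpl; [symmetry; apply vsum_zero|].
  rewrite IH, <- vsum_add. reflexivity.
Qed.

Lemma vsum_mul N M f g :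
  vsum N f * vsum M g = vsum N (fun i => vsum M (fun j => f i * g j)).
Proof.
  rewrite Rmult_comm, <- vsum_scal.
  apply vsum_ext; intros i _. rewrite Rmult_comm, <- vsum_scal. reflexivity.
Qed.

Lemma dot_ext n u u' w w' :
  (forall k, (k < n)%nat -> u k = u' k) -> (forall k, (k < n)%nat -> w k = w' k) ->
  dot n u w = dot n u' w'.
Proof. intros Hu Hw. apply vsum_ext; intros k Hk. rewrite Hu, Hw by exact Hk. reflexivity. Qed.

Lemma dot_addl n u v w : dot n (fun k => u k + v k) w = dot n u w + dot n v w.
Proof. unfold dot. rewrite <- vsum_add. apply vsum_ext; intros; ring. Qed.

Lemma dot_addr n u v w : dot n w (fun k => u k + v k) = dot n w u + dot n w v.
Proof. unfold dot. rewrite <- vsum_add. apply vsum_ext; intros; ring. Qed.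

Lemma mv_ext c M u v i :
  (forall j, (j < c)%nat -> u j = v j) -> mv c M u i = mv c M v i.
Proof. intros Huv. apply vsum_ext; intros j Hj. rewrite Huv by exact Hj. reflexivity. Qed.

Lemma mv_add c M u v i : mv c M (fun j => u j + v j) i = mv c M u i + mv c M v i.
Proof. unfold mv. rewrite <- vsum_add. apply vsum_ext; intros; ring. Qed.

Lemma mv_Acl n m A B K v k :
  mv n (Acl m A B K) v k = mv n A v k + mv m B (mv n K v) k.
Proof.
  unfold mv, Acl.
  transitivity (vsum n (fun j => A k j * v j)
                + vsum n (fun j => vsum m (fun l => B k l * K l j * v j))).
  - rewrite <- vsum_add. apply vsum_ext; intros j _.
    rewrite Rmult_plus_distr_r, (Rmult_comm (vsum _ _)), <- vsum_scal.
    f_equal. apply vsum_ext; intros; ring.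
  - f_equal. rewrite vsum_swap. apply vsum_ext; intros l _.
    rewrite <- vsum_scal. apply vsum_ext; intros; ring.
Qed.

Lemma dot_mv_expand n u M v :
  dot n u (mv n M v) = vsum n (fun i => vsum n (fun j => u i * v j * M i j)).
Proof.
  unfold dot, mv. apply vsum_ext; intros i _.
  rewrite <- vsum_scal. apply vsum_ext; intros; ring.
Qed.

Lemma dot_mv_sym n M u v : symmetric n M -> dot n u (mv n M v) = dot n v (mv n M u).
Proof.
  intros HM. rewrite !dot_mv_expand, vsum_swap.
  apply vsum_ext; intros i Hi. apply vsum_ext; intros j Hj.
  rewrite (HM j i) by assumption. ring.
Qed.

Lemma dot_gram n M N u v :
  dot n (mv n M u) (mv n N v)
  = vsum n (fun i => vsum n (fun j => u i * v j * vsum n (fun l => M l i * N l j))).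
Proof.
  unfold dot, mv.
  transitivity (vsum n (fun l => vsum n (fun i => vsum n (fun j =>
                  u i * v j * (M l i * N l j))))).
  - apply vsum_ext; intros l _. rewrite vsum_mul.
    apply vsum_ext; intros i _. apply vsum_ext; intros; ring.
  - rewrite vsum_swap. apply vsum_ext; intros i _.
    rewrite vsum_swap. apply vsum_ext; intros j _. apply vsum_scal.
Qed.

Lemma dot_compose n M N u v :
  dot n u (mv n N (mv n M v))
  = vsum n (fun i => vsum n (fun j => u i * v j * vsum n (fun l => N i l * M l j))).
Proof.
  unfold dot, mv. apply vsum_ext; intros i _.
  transitivity (vsum n (fun l => vsum n (fun j => u i * v j * (N i l * M l j)))).
  - rewrite <- vsum_scal. apply vsum_ext; intros l _.
    rewrite <- Rmult_assoc, <- vsum_scal. apply vsum_ext; intros; ring.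
  - rewrite vsum_swap. apply vsum_ext; intros j _. apply vsum_scal.
Qed.

Section ClosedLoopAlgebra.

Variables (n m : nat) (A B K P Q : mat).
Hypothesis HPsym : symmetric n P.
Hypothesis Hlyap : lyapunov_eq n m A B K P Q.

Lemma lyapunov_quad v :
  dot n (mv n (Acl m A B K) v) (mv n P v) + dot n v (mv n P (mv n (Acl m A B K) v))
  = - quad n Q v.
Proof.
  unfold quad. rewrite dot_gram, dot_compose, dot_mv_expand, <- vsum_add, <- vsum_opp.
  apply vsum_ext; intros i Hi. rewrite <- vsum_add, <- vsum_opp.
  apply vsum_ext; intros j Hj.
  rewrite <- Rmult_plus_distr_l, (Hlyap i j Hi Hj). ring.
Qed.

Lemma sampled_lyapunov_derivative (v vs err dv : vec) :
  (forall k, (k < n)%nat -> err k = vs k - v k) ->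
  (forall k, (k < n)%nat -> dv k = mv n A v k + mv m B (mv n K vs) k) ->
  dot n dv (mv n P v) + dot n v (mv n P dv) = - quad n Q v + 2 * xPBKw n m P B K v err.
Proof.
  intros Herr Hdv.
  set (cv := mv n (Acl m A B K) v). set (pv := mv m B (mv n K err)).
  assert (Hsplit : forall k, (k < n)%nat -> dv k = cv k + pv k).
  { intros k Hk. rewrite Hdv by exact Hk. unfold cv, pv. rewrite mv_Acl, Rplus_assoc.
    f_equal. rewrite <- mv_add. apply mv_ext; intros l _.
    rewrite <- mv_add. apply mv_ext; intros j Hj. rewrite Herr by exact Hj. ring. }
  rewrite (dot_ext n dv (fun k => cv k + pv k) (mv n P v) (mv n P v)) by auto.
  rewrite (dot_ext n v v (mv n P dv) (fun k => mv n P cv k + mv n P pv k)).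
  2: reflexivity.
  2: { intros k _. rewrite <- mv_add. apply mv_ext; intros j Hj. apply Hsplit, Hj. }
  rewrite dot_addl, dot_addr, (dot_mv_sym n P pv v HPsym).
  unfold cv. rewrite <- Rplus_assoc, (Rplus_assoc (dot _ _ _)), (Rplus_comm (dot n v _)).
  rewrite <- Rplus_assoc, lyapunov_quad. unfold xPBKw. fold pv. ring.
Qed.

End ClosedLoopAlgebra.

Lemma mv_zero c M (w : vec) : (forall j, (j < c)%nat -> w j = 0) -> forall i, mv c M w i = 0.
Proof.
  intros Hw i. unfold mv. rewrite <- (vsum_zero c).
  apply vsum_ext; intros j Hj. rewrite Hw by exact Hj. ring.
Qed.

Lemma xPBKw_zero n m P B K (v w : vec) :
  (forall k, (k < n)%nat -> w k = 0) -> xPBKw n m P B K v w = 0.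
Proof.
  intros Hw. unfold xPBKw, dot. rewrite <- (vsum_zero n). apply vsum_ext; intros k _.
  assert (HK : forall l, mv n K w l = 0) by exact (mv_zero n K w Hw).
  assert (HBK : forall i, mv m B (mv n K w) i = 0) by (apply mv_zero; intros; apply HK).
  rewrite (mv_zero n P _ (fun i _ => HBK i)). ring.
Qed.

(* [right_deriv] is the limit of the right difference quotient, so the
   algebra of limits from [Rlimit] yields its sum and product rules. *)
Lemma right_deriv_limit f t l :
  right_deriv f t l <-> limit1_in (fun h => (f (t + h) - f t) / h) (fun h => 0 < h) l 0.
Proof.
  unfold right_deriv, limit1_in, limit_in; simpl; unfold Rdist. split.
  - intros H eps Heps. destruct (H eps Heps) as [d [Hd Hlim]].
    exists d; split; [exact Hd|]. intros h [Hh Hhd].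
    rewrite Rminus_0_r, Rabs_right in Hhd by lra. apply Hlim; lra.
  - intros H eps Heps. destruct (H eps Heps) as [d [Hd Hlim]].
    exists d; split; [exact Hd|]. intros h Hh.
    apply Hlim. rewrite Rminus_0_r, Rabs_right by lra. lra.
Qed.

Lemma limit1_in_ext f g D l x0 :
  (forall h, D h -> f h = g h) -> limit1_in f D l x0 -> limit1_in g D l x0.
Proof.
  intros Hfg H eps Heps. destruct (H eps Heps) as [a [Ha Hlim]].
  exists a; split; [exact Ha|]. intros y [Dy Hy]. rewrite <- Hfg by exact Dy. apply Hlim; auto.
Qed.

Lemma right_deriv_const c t : right_deriv (fun _ => c) t 0.
Proof.
  intros eps Heps. exists 1; split; [lra|]. intros h Hh.
  replace ((c - c) / h - 0) with 0 by (field; lra). rewrite Rabs_R0. exact Heps.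
Qed.

Lemma right_deriv_plus f g t lf lg :
  right_deriv f t lf -> right_deriv g t lg -> right_deriv (fun s => f s + g s) t (lf + lg).
Proof.
  rewrite !right_deriv_limit. intros Hf Hg.
  eapply limit1_in_ext; [|exact (limit_plus _ _ _ _ _ _ Hf Hg)].
  intros h Hh; simpl. field. lra.
Qed.

Lemma right_deriv_mult f g t lf lg :
  right_deriv f t lf -> right_deriv g t lg ->
  right_deriv (fun s => f s * g s) t (lf * g t + f t * lg).
Proof.
  rewrite !right_deriv_limit. intros Hf Hg.
  (* right continuity of [g], written through the difference quotient *)
  assert (Hgc : limit1_in (fun h => g t + h * ((g (t + h) - g t) / h))
                          (fun h => 0 < h) (g t + 0 * lg) 0).
  { apply limit_plus; [apply (limit_free g)|apply limit_mul; [apply lim_x|exact Hg]]. }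
  rewrite Rmult_0_l, Rplus_0_r in Hgc.
  eapply limit1_in_ext;
    [|exact (limit_plus _ _ _ _ _ _ (limit_mul _ _ _ _ _ _ Hf Hgc)
              (limit_mul _ _ _ _ _ _ (limit_free f _ t 0) Hg))].
  intros h Hh; simpl. field. lra.
Qed.

Lemma right_deriv_scal c f t l :
  right_deriv f t l -> right_deriv (fun s => c * f s) t (c * l).
Proof.
  intros Hf. replace (c * l) with (0 * f t + c * l) by ring.
  exact (right_deriv_mult _ _ _ _ _ (right_deriv_const c t) Hf).
Qed.

Lemma right_deriv_of_derivable f t l :
  derivable_pt_lim f t l -> right_deriv f t l.
Proof.
  intros H eps Heps. destruct (H eps Heps) as [d Hd].
  exists d; split; [apply cond_pos|]. intros h Hh.
  apply Hd; [lra|]. rewrite Rabs_right; lra.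
Qed.

Lemma derivable_pt_lim_exp_scal c s :
  derivable_pt_lim (fun u => exp (c * u)) s (c * exp (c * s)).
Proof.
  replace (c * exp (c * s)) with (exp (c * s) * (c * 1)) by ring.
  apply (derivable_pt_lim_comp (fun u => c * u) exp).
  - apply (derivable_pt_lim_scal id). apply derivable_pt_lim_id.
  - apply derivable_pt_lim_exp.
Qed.

Lemma continuity_pt_exp_scal c s : continuity_pt (fun u => exp (c * u)) s.
Proof. apply derivable_continuous_pt. eexists. apply derivable_pt_lim_exp_scal. Qed.

Lemma right_deriv_vsum N F dF t :
  (forall i, (i < N)%nat -> right_deriv (fun s => F s i) t (dF i)) ->
  right_deriv (fun s => vsum N (F s)) t (vsum N dF).
Proof.
  induction N as [|N IH]; intros H; simpl; [apply right_deriv_const|].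
  apply right_deriv_plus; [apply IH; intros; apply H; lia|apply H; lia].
Qed.

Lemma derivable_pt_lim_vsum N F dF t :
  (forall i, (i < N)%nat -> derivable_pt_lim (fun s => F s i) t (dF i)) ->
  derivable_pt_lim (fun s => vsum N (F s)) t (vsum N dF).
Proof.
  induction N as [|N IH]; intros H; simpl; [apply derivable_pt_lim_const|].
  apply (derivable_pt_lim_plus (fun s => vsum N (F s)) (fun s => F s N));
    [apply IH; intros; apply H; lia|apply H; lia].
Qed.

Lemma continuity_pt_vsum N F t :
  (forall i, (i < N)%nat -> continuity_pt (fun s => F s i) t) ->
  continuity_pt (fun s => vsum N (F s)) t.
Proof.
  induction N as [|N IH]; intros H; simpl.
  - apply continuity_pt_const. intros ? ?. reflexivity.
  - apply (continuity_pt_plus (fun s => vsum N (F s)) (fun s => F s N));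
      [apply IH; intros; apply H; lia|apply H; lia].
Qed.

Lemma quad_right_deriv n P (v : R -> vec) t dv :
  (forall k, (k < n)%nat -> right_deriv (fun s => v s k) t (dv k)) ->
  right_deriv (fun s => quad n P (v s)) t (dot n dv (mv n P (v t)) + dot n (v t) (mv n P dv)).
Proof.
  intros Hv. unfold quad, dot. rewrite <- vsum_add.
  apply (right_deriv_vsum n (fun s i => v s i * mv n P (v s) i)). intros i Hi.
  apply right_deriv_mult; [apply Hv, Hi|].
  apply (right_deriv_vsum n (fun s j => P i j * v s j) (fun j => P i j * dv j)).
  intros j Hj. apply right_deriv_scal, Hv, Hj.
Qed.

Lemma quad_derivable_pt_lim n P (v : R -> vec) t dv :
  (forall k, (k < n)%nat -> derivable_pt_lim (fun s => v s k) t (dv k)) ->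
  derivable_pt_lim (fun s => quad n P (v s)) t
    (dot n dv (mv n P (v t)) + dot n (v t) (mv n P dv)).
Proof.
  intros Hv. unfold quad, dot. rewrite <- vsum_add.
  apply (derivable_pt_lim_vsum n (fun s i => v s i * mv n P (v s) i)). intros i Hi.
  apply (derivable_pt_lim_mult (fun s => v s i) (fun s => mv n P (v s) i)); [apply Hv, Hi|].
  apply (derivable_pt_lim_vsum n (fun s j => P i j * v s j) (fun j => P i j * dv j)).
  intros j Hj. apply (derivable_pt_lim_scal (fun s => v s j)), Hv, Hj.
Qed.

Lemma quad_continuity_pt n P (v : R -> vec) t :
  (forall k, (k < n)%nat -> continuity_pt (fun s => v s k) t) ->
  continuity_pt (fun s => quad n P (v s)) t.
Proof.
  intros Hv. unfold quad, dot.
  apply (continuity_pt_vsum n (fun s i => v s i * mv n P (v s) i)). intros i Hi.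
  apply (continuity_pt_mult (fun s => v s i) (fun s => mv n P (v s) i)); [apply Hv, Hi|].
  apply (continuity_pt_vsum n (fun s j => P i j * v s j)).
  intros j Hj. apply (continuity_pt_scal (fun s => v s j)), Hv, Hj.
Qed.

(* Proof: the supremum [c] of the
   good prefix [[a, c]] is good by continuity, and equals [b] by propagation. *)
Lemma continuous_induction (f : R -> R) a b :
  a <= b -> 0 <= f a ->
  (forall s, a < s <= b -> continuity_pt f s) ->
  (forall s, a <= s < b -> 0 <= f s ->
     exists dl, 0 < dl /\ forall u, s < u < s + dl -> 0 <= f u) ->
  forall s, a <= s <= b -> 0 <= f s.
Proof.
  intros Hab Ha Hcont Hstep.
  set (Good := fun c => a <= c <= b /\ forall u, a <= u <= c -> 0 <= f u).
  assert (Ga : Good a).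
  { split; [lra|]. intros u Hu. replace u with a by lra. exact Ha. }
  destruct (completeness Good) as [c [Hub Hlub]].
  { exists b. intros z [Hz _]. lra. }
  { exists a. exact Ga. }
  assert (Hac : a <= c) by (apply Hub, Ga).
  assert (Hcb : c <= b) by (apply Hlub; intros z [Hz _]; lra).
  assert (Hbelow : forall u, a <= u < c -> 0 <= f u).
  { intros u Hu. apply Rnot_lt_le. intros Hneg.
    apply (Rlt_not_le c u); [lra|].
    apply Hlub. intros z [Hz Hzf]. apply Rnot_lt_le. intros Hzu.
    specialize (Hzf u ltac:(lra)). lra. }
  assert (Hc : 0 <= f c).
  { destruct (Req_dec c a) as [->|Hca]; [exact Ha|].
    apply Rnot_lt_le. intros Hneg.
    specialize (Hcont c ltac:(lra)).
    unfold continuity_pt, continue_in, limit1_in, limit_in in Hcont; simpl in Hcont.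
    unfold Rdist in Hcont.
    destruct (Hcont (- f c) ltac:(lra)) as [al [Hal Hclose]].
    set (u := Rmax a (c - al / 2)).
    assert (a <= u) by apply Rmax_l. assert (c - al / 2 <= u) by apply Rmax_r.
    assert (u < c) by (apply Rmax_lub_lt; lra).
    assert (Hfu : Rabs (f u - f c) < - f c).
    { apply Hclose. split; [split; [exact I|lra]|]. rewrite Rabs_left; lra. }
    specialize (Hbelow u ltac:(lra)). apply Rabs_def2 in Hfu. lra. }
  assert (Hupto : forall u, a <= u <= c -> 0 <= f u).
  { intros u Hu. destruct (Req_dec u c) as [->|]; [exact Hc|]. apply Hbelow; lra. }
  destruct (Req_dec c b) as [<-|Hcb']; [exact Hupto|].
  exfalso. destruct (Hstep c ltac:(lra) Hc) as [dl [Hdl Hright]].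
  set (z := Rmin b (c + dl / 2)).
  assert (z <= b) by apply Rmin_l. assert (z <= c + dl / 2) by apply Rmin_r.
  assert (c < z) by (apply Rmin_glb_lt; lra).
  assert (Gz : Good z).
  { split; [lra|]. intros u Hu.
    destruct (Rle_or_lt u c); [apply Hupto; lra|apply Hright; lra]. }
  specialize (Hub z Gz). lra.
Qed.

Lemma right_deriv_lower_bound f t D eps :
  right_deriv f t D -> 0 < eps ->
  exists dl, 0 < dl /\ forall u, t < u < t + dl -> f t + (u - t) * (D - eps) < f u.
Proof.
  intros HD Heps. destruct (HD eps Heps) as [dl [Hdl Hquot]].
  exists dl; split; [exact Hdl|]. intros u Hu.
  specialize (Hquot (u - t) ltac:(lra)). replace (t + (u - t)) with u in Hquot by ring.
  apply Rabs_def2 in Hquot. destruct Hquot as [_ Hlow].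
  assert (Hq : (u - t) * (D - eps) < (u - t) * ((f u - f t) / (u - t)))
    by (apply Rmult_lt_compat_l; lra).
  replace ((u - t) * ((f u - f t) / (u - t))) with (f u - f t) in Hq by (field; lra).
  lra.
Qed.

Lemma nonneg_invariance (f : R -> R) a b :
  a <= b -> 0 <= f a ->
  (forall s, a < s <= b -> continuity_pt f s) ->
  (forall s, a <= s < b -> 0 <= f s ->
     exists D, right_deriv f s D /\ (f s = 0 -> 0 < D)) ->
  forall s, a <= s <= b -> 0 <= f s.
Proof.
  intros Hab Ha Hcont Hderiv. apply continuous_induction; [exact Hab|exact Ha|exact Hcont|].
  intros s Hs Hfs. destruct (Hderiv s Hs Hfs) as [D [HD Hzero]].
  destruct (Req_dec (f s) 0) as [H0|Hpos].
  - destruct (right_deriv_lower_bound f s D D HD (Hzero H0)) as [dl [Hdl Hlow]].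
    exists dl; split; [exact Hdl|]. intros u Hu. specialize (Hlow u Hu). lra.
  - set (M := Rabs D + 1).
    assert (HM : 0 < M) by (unfold M; pose proof (Rabs_pos D); lra).
    assert (HDM : - M <= D - 1) by (unfold M; pose proof (Rle_abs (- D)); rewrite Rabs_Ropp in *; lra).
    destruct (right_deriv_lower_bound f s D 1 HD Rlt_0_1) as [dl [Hdl Hlow]].
    exists (Rmin dl (f s / M)). split.
    { apply Rmin_glb_lt; [exact Hdl|apply Rdiv_lt_0_compat; lra]. }
    intros u Hu. assert (Hu1 : u - s < dl) by (pose proof (Rmin_l dl (f s / M)); lra).
    assert (Hu2 : (u - s) * M < f s).
    { pose proof (Rmin_r dl (f s / M)).
      replace (f s) with (f s / M * M) by (field; lra).
      apply Rmult_lt_compat_r; lra. }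
    specialize (Hlow u ltac:(lra)).
    assert ((u - s) * - M <= (u - s) * (D - 1)) by (apply Rmult_le_compat_l; lra).
    lra.
Qed.

Lemma right_deriv_nonincreasing (f : R -> R) a b :
  a <= b ->
  (forall s, a < s <= b -> continuity_pt f s) ->
  (forall s, a <= s < b -> exists D, right_deriv f s D /\ D <= 0) ->
  f b <= f a.
Proof.
  intros Hab Hcont Hderiv.
  (* for every [eps > 0], [f a - f s + eps (s - a)] stays nonnegative *)
  assert (Heps : forall eps, 0 < eps -> f b <= f a + eps * (b - a)).
  { intros eps Heps.
    set (g := fun s => f a + -1 * f s + (eps * s + - (eps * a))).
    enough (0 <= g b) by (unfold g in *; cbv beta in *; lra).
    apply (nonneg_invariance g a b); [exact Hab|unfold g; cbv beta; lra| | |lra].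
    - intros s Hs. unfold g.
      apply (continuity_pt_plus (fun s => f a + -1 * f s) (fun s => eps * s + - (eps * a))).
      + apply (continuity_pt_plus (fun _ => f a) (fun s => -1 * f s));
          [apply continuity_pt_const; intros ? ?; reflexivity|].
        apply (continuity_pt_scal f), Hcont, Hs.
      + apply derivable_continuous_pt, derivable_pt_plus;
          [apply derivable_pt_scal, derivable_pt_id|apply derivable_pt_const].
    - intros s Hs _. destruct (Hderiv s Hs) as [D [HD HDle]].
      exists (0 + -1 * D + (eps * 1 + 0)). split; [|intros; lra].
      apply right_deriv_plus.
      + apply right_deriv_plus; [apply right_deriv_const|apply right_deriv_scal, HD].
      + apply right_deriv_plus; [|apply right_deriv_const].
        apply right_deriv_scal, right_deriv_of_derivable, derivable_pt_lim_id. }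
  apply Rnot_lt_le. intros Hlt.
  specialize (Heps ((f b - f a) / (b - a + 1)) ltac:(apply Rdiv_lt_0_compat; lra)).
  assert (Hfrac : (f b - f a) / (b - a + 1) * (b - a) < f b - f a).
  { apply (Rmult_lt_reg_r (b - a + 1)); [lra|].
    replace ((f b - f a) / (b - a + 1) * (b - a) * (b - a + 1))
      with ((f b - f a) * (b - a)) by (field; lra).
    nra. }
  lra.
Qed.

Lemma right_deriv_gronwall (f : R -> R) lam b :
  0 <= b ->
  (forall s, 0 < s <= b -> continuity_pt f s) ->
  (forall s, 0 <= s < b -> exists D, right_deriv f s D /\ D <= - lam * f s) ->
  f b <= f 0 * exp (- lam * b).
Proof.
  intros Hb Hcont Hderiv.
  assert (Hmono : f b * exp (lam * b) <= f 0 * exp (lam * 0)).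
  { apply (right_deriv_nonincreasing (fun s => f s * exp (lam * s))); [exact Hb| |].
    - intros s Hs. apply (continuity_pt_mult f (fun s => exp (lam * s)));
        [apply Hcont, Hs|apply continuity_pt_exp_scal].
    - intros s Hs. destruct (Hderiv s Hs) as [D [HD HDle]].
      eexists. split.
      + apply right_deriv_mult;
          [exact HD|apply right_deriv_of_derivable, derivable_pt_lim_exp_scal].
      + pose proof (exp_pos (lam * s)). nra. }
  rewrite Rmult_0_r, exp_0, Rmult_1_r in Hmono.
  replace (f b) with (f b * exp (lam * b) * exp (- lam * b)).
  - apply Rmult_le_compat_r; [left; apply exp_pos|exact Hmono].
  - rewrite Rmult_assoc, <- exp_plus. replace (lam * b + - lam * b) with 0 by ring.
    rewrite exp_0. ring.
Qed.

Lemma ev_valid_S nev j : ev_valid nev (S j) -> ev_valid nev j /\ ev_has_next nev j.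
Proof. destruct nev; simpl; intros; split; auto; lia. Qed.

Lemma ev_valid_le nev j k : (j <= k)%nat -> ev_valid nev k -> ev_valid nev j.
Proof. destruct nev; simpl; auto; lia. Qed.

Lemma ev_has_next_dec nev j : {ev_has_next nev j} + {~ ev_has_next nev j}.
Proof. destruct nev as [N|]; simpl; [apply lt_dec|left; exact I]. Qed.

Section EventTimes.

Variables (ts : nat -> R) (nev : option nat).
Hypothesis Hts0 : ts O = 0.
Hypothesis Hstep : forall j, ev_valid nev j -> ev_has_next nev j -> ts j <= ts (S j).

Lemma event_time_nonneg j : ev_valid nev j -> 0 <= ts j.
Proof.
  induction j as [|j IH]; intros Hv; [lra|].
  destruct (ev_valid_S _ _ Hv) as [Hvj Hnext].
  specialize (IH Hvj). specialize (Hstep j Hvj Hnext). lra.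
Qed.

Lemma interval_cover i t s :
  in_interval nev ts i t -> 0 <= s <= t -> exists j, in_interval nev ts j s.
Proof.
  intros (Hvi & Hti & Hnexti) Hs.
  (* search upwards from an index [j <= i] with [t_j <= s] *)
  assert (Hsearch : forall d j, (j + d = i)%nat -> ts j <= s -> exists j', in_interval nev ts j' s).
  { induction d as [|d IH]; intros j Hjd Hj.
    - exists j. replace j with i in * by lia.
      split; [exact Hvi|split; [exact Hj|]]. intros Hn. specialize (Hnexti Hn). lra.
    - destruct (Rlt_or_le s (ts (S j))) as [Hlt|Hge].
      + exists j. split; [apply (ev_valid_le _ j i); [lia|exact Hvi]|].
        split; [exact Hj|]. intros _. exact Hlt.
      + apply (IH (S j)); [lia|exact Hge]. }
  apply (Hsearch i O); [lia|]. rewrite Hts0. lra.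
Qed.

End EventTimes.

Section ClosedLoop.

Variables (n m : nat) (A B K P Q : mat) (kappa sigma lambda theta : R).
Variables (x e : R -> vec) (eta : R -> R) (ts : nat -> R) (nev : option nat).

Hypothesis HPsym : symmetric n P.
Hypothesis HQpos : forall v, vnonzero n v -> 0 < quad n Q v.
Hypothesis Hlyap : lyapunov_eq n m A B K P Q.
Hypothesis HQP : loewner_ge_scaled n Q kappa P.
Hypothesis Hsigma : 0 < sigma < 1.
Hypothesis Htheta : 0 < theta.
Hypothesis Hlambda : lambda = (1 - sigma) * kappa.
Hypothesis Hcl : closed_loop n m A B K P Q sigma lambda theta x e eta ts nev.
Hypothesis Hnz : forall i, ev_valid nev i -> vnonzero n (x (ts i)).

Local Notation V s := (quad n P (x s)).
Local Notation Vdot s := (- quad n Q (x s) + 2 * xPBKw n m P B K (x s) (e s)).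
Local Notation gap s := (sigma * quad n Q (x s) - 2 * xPBKw n m P B K (x s) (e s)).

Lemma event_times_step j : ev_valid nev j -> ev_has_next nev j -> ts j <= ts (S j).
Proof.
  intros Hv Hnext. destruct Hcl as (_ & _ & _ & _ & _ & _ & Htrig).
  destruct (Htrig j Hv) as [Hinf _]. destruct (Hinf Hnext) as [_ Hglb].
  apply Hglb. intros s [Hs _]. lra.
Qed.

Lemma interval_time_nonneg j s : in_interval nev ts j s -> 0 <= s.
Proof.
  intros (Hv & Hjs & _). destruct Hcl as (Hts0 & _).
  pose proof (event_time_nonneg ts nev Hts0 event_times_step j Hv). lra.
Qed.

Lemma closed_loop_cover i t s :
  in_interval nev ts i t -> 0 <= s <= t -> exists j, in_interval nev ts j s.
Proof. destruct Hcl as (Hts0 & _). exact (interval_cover ts nev Hts0 i t s). Qed.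

Lemma lyapunov_right_deriv j s :
  in_interval nev ts j s ->
  right_deriv (fun u => V u) s (Vdot s) /\
  (ts j < s -> derivable_pt_lim (fun u => V u) s (Vdot s)).
Proof.
  intros Hjs. destruct Hcl as (_ & _ & Herr & _ & Hxd & _).
  set (dx := fun k => mv n A (x s) k + mv m B (mv n K (x (ts j))) k).
  assert (Hdx : forall k, (k < n)%nat ->
            right_deriv (fun u => x u k) s (dx k) /\
            (ts j < s -> derivable_pt_lim (fun u => x u k) s (dx k)))
    by (intros k Hk; exact (Hxd j s k Hjs Hk)).
  rewrite <- (sampled_lyapunov_derivative n m A B K P Q HPsym Hlyap (x s) (x (ts j)) (e s) dx
               (fun k Hk => Herr j s k Hjs Hk) (fun k _ => eq_refl)).
  split.
  - apply quad_right_deriv. intros k Hk. apply Hdx, Hk.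
  - intros Hlt. apply quad_derivable_pt_lim. intros k Hk. apply Hdx; assumption.
Qed.

Lemma closed_loop_continuity j s :
  in_interval nev ts j s -> 0 < s ->
  continuity_pt eta s /\ continuity_pt (fun u => V u) s.
Proof.
  intros Hjs Hs. destruct Hcl as (_ & _ & _ & Hcont & _).
  destruct (Hcont j s Hjs Hs) as [Heta Hx].
  split; [exact Heta|]. apply quad_continuity_pt, Hx.
Qed.

Lemma error_left_limit j s :
  in_interval nev ts j s -> ts j < s -> left_lim_vec n e s (e s).
Proof.
  intros Hjs Hlt k Hk eps Heps. pose proof Hjs as (Hv & Htj & Hnext).
  destruct Hcl as (Hts0 & _ & Herr & Hcont & _).
  assert (Hs : 0 < s) by (pose proof (event_time_nonneg ts nev Hts0 event_times_step j Hv); lra).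
  destruct (Hcont j s Hjs Hs) as [_ Hx]. specialize (Hx k Hk).
  unfold continuity_pt, continue_in, limit1_in, limit_in in Hx; simpl in Hx; unfold Rdist in Hx.
  destruct (Hx eps Heps) as [al [Hal Hclose]].
  exists (Rmin al (s - ts j)). split; [apply Rmin_glb_lt; lra|].
  intros r Hr. pose proof (Rmin_l al (s - ts j)). pose proof (Rmin_r al (s - ts j)).
  assert (Hjr : in_interval nev ts j r).
  { split; [exact Hv|split; [lra|]]. intros Hn. specialize (Hnext Hn). lra. }
  rewrite (Herr j r k Hjr Hk), (Herr j s k Hjs Hk).
  replace (x (ts j) k - x r k - (x (ts j) k - x s k)) with (- (x r k - x s k)) by ring.
  rewrite Rabs_Ropp. apply Hclose. split; [split; [exact I|lra]|]. rewrite Rabs_left; lra.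
Qed.

(* Inside an interval this
   is the definition of [t_(j+1)] as an infimum; at [t_j] itself [e = 0] and
   [x(t_j) <> 0]. *)
Lemma trigger_not_met j s :
  in_interval nev ts j s -> 0 <= eta s -> 0 < eta s + theta * gap s.
Proof.
  intros Hjs Heta. pose proof Hjs as (Hv & Htj & Hnext).
  destruct Hcl as (_ & _ & Herr & _ & _ & _ & Htrig).
  destruct (Rle_lt_or_eq_dec _ _ Htj) as [Hlt|Heq].
  - apply Rnot_le_lt. intros Hfire.
    destruct (Htrig j Hv) as [Hinf Hlast]; cbv zeta in Hinf, Hlast.
    assert (Hs : ts j < s /\ exists l, left_lim_vec n e s l /\
              eta s + theta * (sigma * quad n Q (x s) - 2 * xPBKw n m P B K (x s) l) <= 0)
      by (split; [exact Hlt|exists (e s); split; [apply (error_left_limit j)|]; assumption]).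
    destruct (ev_has_next_dec nev j) as [Hn|Hn].
    + destruct (Hinf Hn) as [Hlb _]. specialize (Hlb s Hs). specialize (Hnext Hn). lra.
    + exact (Hlast Hn s Hs).
  - rewrite (xPBKw_zero n m P B K (x s) (e s))
      by (intros k Hk; rewrite (Herr j s k Hjs Hk), Heq; ring).
    assert (HQs : 0 < quad n Q (x s)) by (apply HQpos; rewrite <- Heq; apply Hnz, Hv).
    pose proof (Rmult_lt_0_compat _ _ Htheta (Rmult_lt_0_compat _ _ (proj1 Hsigma) HQs)).
    lra.
Qed.

(* The dynamic variable stays nonnegative: whenever [eta] vanishes, its
   derivative equals the gap, which is positive by [trigger_not_met]. *)
Lemma eta_nonneg i t : in_interval nev ts i t -> forall s, 0 <= s <= t -> 0 <= eta s.
Proof.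
  intros Hit. pose proof Hcl as (_ & Heta0 & _ & _ & _ & Hetad & _).
  apply nonneg_invariance; [apply (interval_time_nonneg i), Hit|rewrite Heta0; lra| |].
  - intros s Hs. destruct (closed_loop_cover i t s Hit ltac:(lra)) as [j Hjs].
    apply (closed_loop_continuity j s Hjs), Hs.
  - intros s Hs Hetas. destruct (closed_loop_cover i t s Hit ltac:(lra)) as [j Hjs].
    destruct (Hetad j s Hjs) as [Hd _].
    eexists; split; [exact Hd|]. intros Hzero. rewrite Hzero.
    pose proof (trigger_not_met j s Hjs Hetas) as Hpos. rewrite Hzero in Hpos.
    apply (Rmult_lt_reg_l theta); lra.
Qed.

(* The storage function [V + eta] decays at rate [lambda]:
   its derivative is [- (1 - sigma) x^T Q x - lambda eta <= - lambda (V + eta)]. *)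
Lemma storage_decay i t :
  in_interval nev ts i t -> V t + eta t <= V 0 * exp (- lambda * t).
Proof.
  intros Hit. pose proof Hcl as (_ & Heta0 & _ & _ & _ & Hetad & _).
  assert (Hdecay := right_deriv_gronwall (fun s => V s + eta s) lambda t
                      (interval_time_nonneg i t Hit)).
  cbv beta in Hdecay. rewrite Heta0, Rplus_0_r in Hdecay. apply Hdecay.
  - intros s Hs. destruct (closed_loop_cover i t s Hit ltac:(lra)) as [j Hjs].
    destruct (closed_loop_continuity j s Hjs (proj1 Hs)) as [Heta HV].
    apply (continuity_pt_plus (fun u => V u) eta); assumption.
  - intros s Hs. destruct (closed_loop_cover i t s Hit ltac:(lra)) as [j Hjs].
    destruct (lyapunov_right_deriv j s Hjs) as [HV _]. destruct (Hetad j s Hjs) as [Heta _].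
    eexists; split; [exact (right_deriv_plus _ _ _ _ _ HV Heta)|].
    assert (HQs : (1 - sigma) * (kappa * V s) <= (1 - sigma) * quad n Q (x s))
      by (apply Rmult_le_compat_l; [lra|apply HQP]).
    rewrite Hlambda in *. lra.
Qed.

Lemma lyapunov_derivative_bound i t :
  in_interval nev ts i t ->
  exists D,
    right_deriv (fun s => V s) t D /\
    (ts i < t -> derivable_pt_lim (fun s => V s) t D) /\
    D <= (sigma - 1) * kappa * V t
         + / theta * (V 0 * exp ((sigma - 1) * kappa * t) - V t).
Proof.
  intros Hit. exists (Vdot t).
  destruct (lyapunov_right_deriv i t Hit) as [Hrd Hd]. split; [exact Hrd|split; [exact Hd|]].
  assert (Heta : 0 <= eta t) by (apply (eta_nonneg i t Hit); pose proof (interval_time_nonneg i t Hit); lra).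
  pose proof (trigger_not_met i t Hit Heta) as Hgap.
  pose proof (storage_decay i t Hit) as Hstore.
  replace ((sigma - 1) * kappa * t) with (- lambda * t) by (rewrite Hlambda; ring).
  assert (HQs : (1 - sigma) * (kappa * V t) <= (1 - sigma) * quad n Q (x t))
    by (apply Rmult_le_compat_l; [lra|apply HQP]).
  (* divide [- theta gap < eta <= V 0 e^(- lambda t) - V t] by [theta] *)
  assert (Hdiv : - gap t <= / theta * (V 0 * exp (- lambda * t) - V t)).
  { apply (Rmult_le_reg_l theta); [exact Htheta|].
    rewrite <- Rmult_assoc, Rinv_r, Rmult_1_l by lra. lra. }
  lra.
Qed.

End ClosedLoop.

Theorem mainTheorem7 (n m : nat) (A B K P Q : mat) (kappa sigma lambda theta : R)
  (x e : R -> vec) (eta : R -> R) (ts : nat -> R) (nev : option nat) :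
  hurwitz n (Acl m A B K) ->
  posdef n P -> posdef n Q ->
  lyapunov_eq n m A B K P Q ->
  0 < kappa -> loewner_ge_scaled n Q kappa P ->
  0 < sigma < 1 -> 0 < theta -> lambda = (1 - sigma) * kappa ->
  closed_loop n m A B K P Q sigma lambda theta x e eta ts nev ->
  (forall i, ev_valid nev i -> vnonzero n (x (ts i))) ->
  forall i t, in_interval nev ts i t ->
    exists D,
      right_deriv (fun s => quad n P (x s)) t D /\
      (ts i < t -> derivable_pt_lim (fun s => quad n P (x s)) t D) /\
      D <= (sigma - 1) * kappa * quad n P (x t)
           + / theta * (quad n P (x 0) * exp ((sigma - 1) * kappa * t) - quad n P (x t)).
Proof.
  intros _ [HPsym _] [_ HQpos] Hlyap _ HQP Hsigma Htheta Hlambda Hcl Hnz.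
  exact (lyapunov_derivative_bound n m A B K P Q kappa sigma lambda theta x e eta ts nev
           HPsym HQpos Hlyap HQP Hsigma Htheta Hlambda Hcl Hnz).
Qed.
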